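(* Let $n\ge 3$ and $k\ge 1$. For every function $f\colon V(C_n)\to V(C_{3k})$, we have $\gamma(C_n\otimes_f C_{3k})=kn$; moreover, for every minimum dominating set $D$ of $C_n\otimes_f C_{3k}$ and every $g\in V(C_n)$, $|D\cap (\{g\}\times V(C_{3k}))|=k$.
   Context: $C_m$ is the cycle on $m$ vertices; $\gamma$ denotes the domination number. For graphs $G,H$ and a function $f\colon V(G)\to V(H)$, the Sierpiński product $G\otimes_f H$ is the graph with vertex set $V(G)\times V(H)$ and edges of two types: (type 1) $(g,h)(g,h')$ for every $g\in V(G)$ and every edge $hh'\in E(H)$; (type 2) $(g,f(g'))(g',f(g))$ for every edge $gg'\in E(G)$. *)

From mathcomp Require Import all_boot.
Set Implicit Arguments. Unset Strict Implicit. Unset Printing Implicit Defensive.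

(* The cycle C_m on vertex set 'I_m = {0,...,m-1}: i ~ j iff j = i+1 mod m
   or i = j+1 mod m.  (Used with m >= 3, where it is a simple cycle.) *)
Definition cycle_adj (m : nat) : rel 'I_m :=
  fun i j => (j == (i.+1 %% m) :> nat) || (i == (j.+1 %% m) :> nat).

Definition sierpinski_adj (T U : finType) (eG : rel T) (eH : rel U)
    (f : T -> U) : rel (T * U) :=
  fun x y =>
    ((x.1 == y.1) && eH x.2 y.2) ||
    [&& eG x.1 y.1, x.2 == f y.1 & y.2 == f x.1].

Definition dominating (V : finType) (e : rel V) (D : {set V}) : bool :=
  [forall v, (v \in D) || [exists u in D, e v u]].

Definition domination_number (V : finType) (e : rel V) : nat :=
  \big[minn/#|V|]_(D : {set V} | dominating e D) #|D|.

Definition minimum_dominating (V : finType) (e : rel V) (D : {set V}) : bool :=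
  dominating e D && (#|D| == domination_number e).

From mathcomp Require Import all_boot zify.

(* Lower bound, layer by layer.  Fix g and look at the layer {g} x C_m of
   G (x)_f C_m.  A vertex (g,h) can only be dominated by a vertex of D in the
   same layer, whose closed cycle neighbourhood (a "ball" of at most 3 points)
   then contains h, or through a type-2 edge from (g', f g) with gg' an edge of
   G, in which case h = f g'.  Hence m <= 3 |D_g| + deg_G(g), where D_g is the
   fiber of D over g.  For G = C_n (degree <= 2) and m = 3k this forces
   |D_g| >= k, and summing over the n layers gives |D| >= kn.

   Upper bound.  The "stripe" {(g,h) | h = 1 mod 3} has k vertices per layer
   and dominates already through the type-1 (cycle) edges, so gamma = kn.

   Equality case.  A minimum dominating set has layer sizes that are all >= k
   and add up to kn, so each of them is exactly k. *)

Lemma cycle_adjC {m} : symmetric (@cycle_adj m).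
Proof. by move=> i j; rewrite /cycle_adj orbC. Qed.

Lemma cycle_adj_ordS {m} (i : 'I_m) : cycle_adj i (ordS i).
Proof. by rewrite /cycle_adj eqxx. Qed.

Lemma cycle_adj_ord_pred {m} (i : 'I_m) : cycle_adj i (ord_pred i).
Proof. by rewrite cycle_adjC -{2}(ord_predK i) cycle_adj_ordS. Qed.

Lemma cycle_adjE {m} (i j : 'I_m) :
  cycle_adj i j = (j == ordS i) || (j == ord_pred i).
Proof.
rewrite /cycle_adj -[_ == ordS i]val_eqE; congr (_ || _).
by rewrite -[_ == _ :> nat]/(i == ordS j) eq_sym (can2_eq (@ordSK m) (@ord_predK m)).
Qed.

Lemma card_cycle_nbr {m} (i : 'I_m) : #|[set j | cycle_adj i j]| <= 2.
Proof.
have sub : [set j | cycle_adj i j] \subset [set ordS i; ord_pred i].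
  by apply/subsetP => j; rewrite !inE cycle_adjE.
by apply: leq_trans (subset_leq_card sub) _; rewrite cards2 ltnS leq_b1.
Qed.

Definition cycle_ball {m} (i : 'I_m) : {set 'I_m} := i |: [set ordS i; ord_pred i].

Lemma card_cycle_ball {m} (i : 'I_m) : #|cycle_ball i| <= 3.
Proof. by rewrite /cycle_ball cardsU1 cards2 addnS ltnS -[2]/(1 + 1) leq_add ?leq_b1. Qed.

Lemma cycle_ballP {m} (i j : 'I_m) : (j == i) || cycle_adj i j -> j \in cycle_ball i.
Proof. by rewrite cycle_adjE !inE. Qed.

Lemma card_bigcup_le {T I : finType} (A : {pred I}) (F : I -> {set T}) :
  #|\bigcup_(i in A) F i| <= \sum_(i in A) #|F i|.
Proof.
elim/big_rec2: _ => [|i y x _ h]; first by rewrite cards0.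
exact: leq_trans (leq_card_setU _ _) (leq_add _ h).
Qed.

Definition fiber {T U : finType} (D : {set T * U}) (g : T) : {set U} :=
  [set h | (g, h) \in D].

Lemma card_fiber (T U : finType) (D : {set T * U}) g :
  #|D :&: [set x | x.1 == g]| = #|fiber D g|.
Proof.
have pair_inj : injective (@pair T U g) by move=> x y [].
rewrite -(card_imset _ pair_inj); apply: eq_card => -[a b].
rewrite !inE /=; apply/andP/imsetP => [[xD /eqP eag]|[h]].
  by exists b; rewrite ?inE -?eag.
by rewrite inE => hD [-> ->].
Qed.

(* Every layer of G (x)_f C_m is covered by the closed neighbourhoods of the
   fiber of a dominating set and the f-image of the neighbours of g in G. *)
Lemma layer_cover {T : finType} {eG : rel T} {m : nat} {f : T -> 'I_m}
    {D : {set T * 'I_m}} (g : T) :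
  dominating (sierpinski_adj eG (@cycle_adj m) f) D ->
  m <= 3 * #|fiber D g| + #|[set g' | eG g g']|.
Proof.
move=> /forallP domD.
have cover : [set: 'I_m] \subset
    (\bigcup_(h in fiber D g) cycle_ball h) :|: f @: [set g' | eG g g'].
  apply/subsetP => h _; rewrite inE.
  have [ghD | /existsP [[g' h'] /andP [h'D]]] := orP (domD (g, h)).
    by apply/orP; left; apply/bigcupP; exists h; rewrite ?inE ?cycle_ballP ?eqxx.
  rewrite /sierpinski_adj /= => /orP [/andP [/eqP eg adj] | /and3P [adj /eqP -> _]].
    apply/orP; left; apply/bigcupP; exists h'; first by rewrite inE eg.
    by rewrite cycle_ballP // cycle_adjC adj orbT.
  by apply/orP; right; apply/imsetP; exists g'; rewrite ?inE.
rewrite -[m in m <= _]card_ord -cardsT; apply: leq_trans (subset_leq_card cover) _.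
apply: leq_trans (leq_card_setU _ _) (leq_add _ (leq_imset_card _ _)).
apply: leq_trans (card_bigcup_le _ _) _; rewrite mulnC -sum_nat_const.
by apply: leq_sum => h _; apply: card_cycle_ball.
Qed.

Lemma layer_lower_bound n k (f : 'I_n -> 'I_(3 * k)) D g :
  dominating (sierpinski_adj (@cycle_adj n) (@cycle_adj (3 * k)) f) D ->
  k <= #|D :&: [set x | x.1 == g]|.
Proof.
rewrite card_fiber => /(layer_cover g) cover; have := card_cycle_nbr g; lia.
Qed.

Definition stripe (T : finType) k : {set T * 'I_(3 * k)} :=
  [set x : T * 'I_(3 * k) | x.2 %% 3 == 1].

(* A vertex of C_(3k) outside the stripe has a cyclic neighbour inside it;
   this uses that 3 divides 3k, so residues mod 3 wrap around correctly. *)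
Lemma stripe_neighbour k (h : 'I_(3 * k)) :
  h %% 3 != 1 -> (ordS h %% 3 == 1) || (ord_pred h %% 3 == 1).
Proof.
have dvd3 : 3 %| 3 * k by rewrite dvdn_mulr.
rewrite /= !modn_dvdm //; have := ltn_ord h; lia.
Qed.

Lemma stripe_dominating {T : finType} (eG : rel T) {k : nat} (f : T -> 'I_(3 * k)) :
  dominating (sierpinski_adj eG (@cycle_adj (3 * k)) f) (stripe T k).
Proof.
apply/forallP => -[g h]; rewrite inE /=.
have [//|/stripe_neighbour /orP nbr] := boolP (h %% 3 == 1).
apply/orP; right; apply/existsP.
have [inS | inS] := nbr; [exists (g, ordS h) | exists (g, ord_pred h)];
  by rewrite inE inS /sierpinski_adj /= eqxx ?cycle_adj_ordS ?cycle_adj_ord_pred.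
Qed.

Lemma card_residue1 k : #|[set h : 'I_(3 * k) | h %% 3 == 1]| = k.
Proof.
rewrite -sum1_card big_mkcond /=; under eq_bigr do rewrite inE.
rewrite -(big_mkord xpredT (fun i => if i %% 3 == 1 then 1 else 0)).
elim: k => [|k IH]; first by rewrite muln0 big_geq.
rewrite mulnSr !addnS addn0 !big_nat_recr //= IH.
have r0 : 3 * k %% 3 = 0 by lia.
have r1 : (3 * k).+1 %% 3 = 1 by lia.
have r2 : (3 * k).+2 %% 3 = 2 by lia.
by rewrite r0 r1 r2 addn0 addn1 addn0.
Qed.

Lemma card_stripe (T : finType) k : #|stripe T k| = k * #|T|.
Proof.
have -> : stripe T k = setX [set: T] [set h : 'I_(3 * k) | h %% 3 == 1].
  by apply/setP => -[g h]; rewrite !inE.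
by rewrite cardsX cardsT card_residue1 mulnC.
Qed.

Lemma card_sum_fibers (T U : finType) (D : {set T * U}) :
  #|D| = \sum_(g : T) #|D :&: [set x | x.1 == g]|.
Proof.
rewrite -sum1_card (partition_big fst xpredT) //=.
by apply: eq_bigr => g _; rewrite -sum1_card; apply: eq_bigl => x; rewrite !inE.
Qed.

Lemma dominating_setT (V : finType) (e : rel V) : dominating e [set: V].
Proof. by apply/forallP => v; rewrite inE. Qed.

Lemma bigmin_le (I : eqType) (r : seq I) (P : pred I) (F : I -> nat) x i0 :
  i0 \in r -> P i0 -> \big[minn/x]_(i <- r | P i) F i <= F i0.
Proof.
move=> + Pi0; elim: r => // i r IH; rewrite inE big_cons => /predU1P [<-|/IH le_r].
  by rewrite Pi0 geq_minl.
by case: (P i) => //; apply: leq_trans (geq_minr _ _) le_r.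
Qed.

Lemma domination_number_min {V : finType} {e : rel V} {D : {set V}} :
  dominating e D -> domination_number e <= #|D|.
Proof. exact: bigmin_le (mem_index_enum D). Qed.

Lemma domination_number_lb (V : finType) (e : rel V) b :
  (forall D, dominating e D -> b <= #|D|) -> b <= domination_number e.
Proof.
move=> lb; apply: (big_ind (fun x => b <= x)) => [|x y bx b_y|D /lb] //.
  by rewrite -cardsT lb ?dominating_setT.
by rewrite leq_min bx b_y.
Qed.

Lemma sum_eq_lower_bound (I : finType) a (F : I -> nat) :
  (forall i, a <= F i) -> \sum_i F i = #|I| * a -> forall i, F i = a.
Proof.
move=> lb sumF i; rewrite -sum_nat_const in sumF.
have /leqif_sum [_] : forall j, true -> a <= F j ?= iff (a == F j).
  by move=> j _; apply: leqif_eq.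
by rewrite sumF eqxx => /esym/forallP/(_ i)/eqP.
Qed.

Theorem mainTheorem11 (n k : nat) (hn : 3 <= n) (hk : 1 <= k)
    (f : 'I_n -> 'I_(3 * k)) :
  domination_number (sierpinski_adj (@cycle_adj n) (@cycle_adj (3 * k)) f)
    = k * n /\
  (forall D : {set 'I_n * 'I_(3 * k)},
     minimum_dominating (sierpinski_adj (@cycle_adj n) (@cycle_adj (3 * k)) f) D ->
     forall g : 'I_n, #|D :&: [set x | x.1 == g]| = k).
Proof.
set e := sierpinski_adj _ _ f.
have dominating_lb D : dominating e D -> k * n <= #|D|.
  move=> domD; rewrite card_sum_fibers mulnC -{1}(card_ord n) -sum_nat_const.
  by apply: leq_sum => g _; exact: layer_lower_bound domD.
have gamma : domination_number e = k * n.
  have := domination_number_min (stripe_dominating (@cycle_adj n) f).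
  by rewrite card_stripe card_ord => ub; apply/eqP; rewrite eqn_leq ub domination_number_lb.
split=> // D /andP [domD /eqP cardD].
apply: sum_eq_lower_bound => [g|]; first exact: layer_lower_bound domD.
by rewrite -card_sum_fibers cardD gamma card_ord mulnC.
Qed.
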